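(* For any $\bm f\in\mathscr{F}$, the function $x_{\bm f}$ is not differentiable at any point $t\in[0,1]$ at which $f_\infty$ is continuous and $f_\infty(t)\neq0$. In particular, $x_{\bm f}$ is not differentiable at almost every point of $\{f_\infty\neq0\}$.
   Context: Faber--Schauder functions: $e_{0,0}(t)=\max\{0,\min\{t,1-t\}\}$, $e_{n,k}(t)=2^{-n/2}e_{0,0}(2^nt-k)$ for $n\ge1$, $k=0,\dots,2^n-1$. $\mathscr{F}$ is the class of sequences $\bm f=(f_n)_{n\ge0}$ of bounded functions $f_n:[0,1]\to\mathbb{R}$ converging uniformly to a Riemann integrable function $f_\infty$. For $\bm f\in\mathscr{F}$, $x_{\bm f}:=\sum_{n=0}^\infty\sum_{k=0}^{2^n-1}f_n(k2^{-n})e_{n,k}$. *)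

From HB Require Import structures.
From mathcomp Require Import all_boot all_order all_algebra.
From mathcomp Require Import all_classical all_reals all_analysis.
Set Implicit Arguments. Unset Strict Implicit. Unset Printing Implicit Defensive.
Import Order.TTheory GRing.Theory Num.Theory.
Import numFieldNormedType.Exports.
Local Open Scope classical_set_scope.
Local Open Scope ring_scope.

Section FaberSchauder.
Variable R : realType.

Definition e00 (t : R) : R := Num.max 0 (Num.min t (1 - t)).

Definition schauder (n k : nat) (t : R) : R :=
  (2 : R) `^ (- (n%:R / 2)) * e00 (2 ^+ n * t - k%:R).

Definition riemann_integrable01 (f : R -> R) : Prop :=
  exists I : R, forall eps : R, 0 < eps -> exists delta : R, 0 < delta /\
    forall (m : nat) (s tg : nat -> R),
      s 0%N = 0 -> s m = 1 ->
      (forall i, (i < m)%N -> s i < s i.+1) ->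
      (forall i, (i < m)%N -> s i.+1 - s i < delta) ->
      (forall i, (i < m)%N -> s i <= tg i <= s i.+1) ->
      `| \sum_(i < m) f (tg i) * (s i.+1 - s i) - I | < eps.

Definition in_classF (f : nat -> R -> R) (finf : R -> R) : Prop :=
  (forall n, exists M : R, forall t, 0 <= t <= 1 -> `|f n t| <= M) /\
  (forall eps : R, 0 < eps -> exists N : nat, forall n, (N <= n)%N ->
     forall t, 0 <= t <= 1 -> `|f n t - finf t| < eps) /\
  riemann_integrable01 finf.

Definition x_f (f : nat -> R -> R) (t : R) : R :=
  limn (fun N : nat =>
    \sum_(n < N) \sum_(k < 2 ^ n) f n (k%:R / 2 ^+ n) * schauder n k t).

Definition differentiable01 (x : R -> R) (t : R) : Prop :=
  exists l : R,
    (fun s => (x s - x t) / (s - t)) s @[s --> within `[0, 1] (dnbhs t)] --> l.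

Definition continuous01_at (g : R -> R) (t : R) : Prop :=
  g s @[s --> within `[0, 1] (nbhs t)] --> g t.

End FaberSchauder.

From HB Require Import structures.
From mathcomp Require Import all_boot all_order all_algebra.
From mathcomp Require Import all_classical all_reals all_analysis.
From mathcomp Require Import ring lra zify.
Set Implicit Arguments. Unset Strict Implicit. Unset Printing Implicit Defensive.
Import Order.TTheory GRing.Theory Num.Theory.
Import numFieldNormedType.Exports.
Local Open Scope classical_set_scope.
Local Open Scope ring_scope.

(* The midpoint defect [g m - (g l + g r) / 2] of the dyadic interval
   [[l, r] = [k 2^-n, (k+1) 2^-n]] with midpoint [m] vanishes on every
   Faber-Schauder function except [e_{n,k}], so for [x_f] it equals
   [f_n(k 2^-n) 2^{-n/2} / 2].  If [x_f] were differentiable at [t], the defect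
   of the dyadic intervals containing [t] would be [o(2^-n)]; but near a point
   of continuity of [f_infty] with [f_infty t <> 0] the coefficients stay away
   from 0, and [2^{-n/2} >= 2^-n].  Hence the exceptional set consists of
   discontinuity points of the Riemann integrable [f_infty]: points of
   oscillation at least [2^-j] are covered by the enlarged dyadic cells on
   which [f_infty] oscillates, and comparing two Riemann sums shows that these
   cells have arbitrarily small total length. *)

Section FaberSchauder.
Variable R : realType.
Implicit Types (x u v : R) (g : R -> R) (f : nat -> R -> R).

Lemma e00_le0 x : x <= 0 -> e00 x = 0.
Proof. by move=> x0; apply/max_idPl; rewrite ge_min x0. Qed.

Lemma e00_ge1 x : 1 <= x -> e00 x = 0.
Proof. by move=> x1; apply/max_idPl; rewrite ge_min subr_le0 x1 orbT. Qed.

Lemma e00_left x : 0 <= x <= 1 / 2 -> e00 x = x.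
Proof.
by move=> /andP[x0 x12]; rewrite /e00 (min_idPl _) ?(max_idPr _) //; lra.
Qed.

Lemma e00_right x : 1 / 2 <= x <= 1 -> e00 x = 1 - x.
Proof.
by move=> /andP[x12 x1]; rewrite /e00 (min_idPr _) ?(max_idPr _) //; lra.
Qed.

Lemma e00_natB (a b : nat) : e00 (a%:R - b%:R : R) = 0.
Proof.
have [ab|ba] := leqP a b; first by rewrite e00_le0 // subr_le0 ler_nat.
by rewrite e00_ge1 // lerBrDr addrC natr1 ler_nat.
Qed.

Definition mid_defect g (a b : R) : R := g ((a + b) / 2) - (g a + g b) / 2.

Lemma mid_defect_affine (c d : R) g a b :
  mid_defect (fun s => g (c * s - d)) a b = mid_defect g (c * a - d) (c * b - d).
Proof. by rewrite /mid_defect; congr (g _ - _); field. Qed.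

(* [e00] is affine on every interval containing none of its kinks 0, 1/2, 1. *)
Lemma mid_defect_e00 u v : u <= v ->
  (0 <= u \/ v <= 0) -> (1 / 2 <= u \/ v <= 1 / 2) -> (1 <= u \/ v <= 1) ->
  mid_defect (@e00 R) u v = 0.
Proof.
rewrite /mid_defect => uv [u0|v0]; last by rewrite !e00_le0 //; lra.
move=> [u12|v12] [u1|v1].
- by rewrite !e00_ge1 //; lra.
- by rewrite !e00_right; lra.
- by rewrite !e00_ge1 //; lra.
- by rewrite !e00_left; lra.
Qed.

Definition dyadic (n k : nat) : R := k%:R / 2 ^+ n.

Lemma pow2_gt0 (n : nat) : 0 < (2 : R) ^+ n.
Proof. by rewrite exprn_gt0. Qed.

Lemma pow2_inv_gt0 (n : nat) : 0 < ((2 : R) ^+ n)^-1.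
Proof. by rewrite invr_gt0 pow2_gt0. Qed.

Lemma dyadic0n k : dyadic 0 k = k%:R.
Proof. by rewrite /dyadic expr0 divr1. Qed.

Lemma dyadicn0 n : dyadic n 0 = 0.
Proof. by rewrite /dyadic mul0r. Qed.

Lemma dyadic_ge0 n k : 0 <= dyadic n k.
Proof. by rewrite mulr_ge0 // ltW // pow2_inv_gt0. Qed.

Lemma dyadicS n k : dyadic n k.+1 = dyadic n k + (2 ^+ n)^-1.
Proof. by rewrite /dyadic -natr1 mulrDl mul1r. Qed.

Lemma dyadicSB n k : dyadic n k.+1 - dyadic n k = (2 ^+ n)^-1.
Proof. by rewrite dyadicS addrAC subrr add0r. Qed.

Lemma ler_dyadic n i j : (dyadic n i <= dyadic n j) = (i <= j)%N.
Proof. by rewrite ler_pM2r ?pow2_inv_gt0 // ler_nat. Qed.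

Lemma ltr_dyadic n i j : (dyadic n i < dyadic n j) = (i < j)%N.
Proof. by rewrite ltr_pM2r ?pow2_inv_gt0 // ltr_nat. Qed.

Lemma dyadic_pow2 n : dyadic n (2 ^ n) = 1.
Proof. by rewrite /dyadic natrX divff // gt_eqF // pow2_gt0. Qed.

Lemma dyadic_half n : dyadic n.+1 (2 ^ n) = 1 / 2.
Proof. by rewrite /dyadic natrX exprS; field; rewrite gt_eqF // pow2_gt0. Qed.

Lemma dyadic_double n k : dyadic n.+1 k.*2 = dyadic n k.
Proof. by rewrite /dyadic -muln2 natrM exprS; field; rewrite gt_eqF // pow2_gt0. Qed.

Lemma dyadic_mid n k : (dyadic n k + dyadic n k.+1) / 2 = dyadic n.+1 k.*2.+1.
Proof.
rewrite /dyadic -!natr1 -muln2 natrM exprS.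
by field; rewrite gt_eqF // pow2_gt0.
Qed.

Lemma pow2_dyadic j d k : 2 ^+ j * dyadic (j + d) k = dyadic d k.
Proof. by rewrite /dyadic exprD; field; rewrite !gt_eqF // pow2_gt0. Qed.

Lemma pow2_dyadic_nat j n k : (n <= j)%N ->
  2 ^+ j * dyadic n k = (k * 2 ^ (j - n))%:R.
Proof.
move=> /subnKC {1}<-; rewrite /dyadic natrM natrX exprD.
by field; rewrite gt_eqF // pow2_gt0.
Qed.

Lemma dyadic_cell n t : 0 <= t <= 1 ->
  exists2 k, (k < 2 ^ n)%N & dyadic n k <= t <= dyadic n k.+1.
Proof.
move=> t01; elim: n => [|n [k kn /andP[kt tk]]].
  by exists 0%N => //; rewrite !dyadic0n.
have [tm|mt] := lerP t (dyadic n.+1 k.*2.+1).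
  by exists k.*2; [rewrite expnS; lia | rewrite dyadic_double kt].
exists k.*2.+1; first by rewrite expnS; lia.
by rewrite (ltW mt) -doubleS dyadic_double.
Qed.

Lemma grid_outside_cell d (N k k' : nat) :
  dyadic d N <= dyadic d k - k'%:R \/ dyadic d k.+1 - k'%:R <= dyadic d N.
Proof.
have q0 := pow2_gt0 d.
have E a : dyadic d a - k'%:R = (a%:R - (k' * 2 ^ d)%:R) / 2 ^+ d.
  by rewrite /dyadic natrM natrX; field; rewrite gt_eqF.
rewrite !E /dyadic !ler_pM2r ?invr_gt0 // lerBrDr lerBlDr -!natrD !ler_nat.
by lia.
Qed.

Lemma mid_defect_e00_dyadic d (k k' : nat) :
  mid_defect (@e00 R) (dyadic d k - k'%:R) (dyadic d k.+1 - k'%:R) =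
  if (d == 0%N) && (k' == k) then 1 / 2 else 0.
Proof.
case: ifPn => [/andP[/eqP-> /eqP->]|not_center].
  rewrite /mid_defect !dyadic0n subrr -natr1 (addrC k%:R) addrK add0r.
  by rewrite (e00_le0 (lexx 0)) (e00_ge1 (lexx 1)) e00_left; lra.
have uv : dyadic d k - k'%:R <= dyadic d k.+1 - k'%:R.
  by rewrite lerD2r ler_dyadic.
apply: mid_defect_e00 => //.
- by have := grid_outside_cell d 0 k k'; rewrite dyadicn0.
- case: d not_center {uv} => [|d _]; last first.
    by rewrite -(dyadic_half d); exact: grid_outside_cell.
  rewrite /= !dyadic0n => neq.
  have [kk'|k'k|kk'] := ltngtP k k'; last by rewrite kk' eqxx in neq.
    by right; move: kk'; rewrite -(ler_nat R) -[_.+1%:R]natr1; lra.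
  by left; move: k'k; rewrite -(ler_nat R) -[_.+1%:R]natr1; lra.
- by have := grid_outside_cell d (2 ^ d) k k'; rewrite dyadic_pow2.
Qed.

Lemma mid_defect_hat_dyadic j (k' n k : nat) :
  mid_defect (fun s => e00 (2 ^+ j * s - k'%:R)) (dyadic n k) (dyadic n k.+1) =
  if (j == n) && (k' == k) then 1 / 2 else 0.
Proof.
have [nj|jn] := ltnP n j.
  rewrite /mid_defect dyadic_mid !pow2_dyadic_nat ?(ltnW nj) // !e00_natB.
  by rewrite (gtn_eqF nj) /=; lra.
rewrite -(subnKC jn); move: (n - j)%N => d.
rewrite mid_defect_affine !pow2_dyadic mid_defect_e00_dyadic.
by rewrite -{1}[j]addn0 eqn_add2l [(0 == d)%N]eq_sym.
Qed.

Lemma mid_defect_schauder j k' n k :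
  mid_defect (@schauder R j k') (dyadic n k) (dyadic n k.+1) =
  if (j == n) && (k' == k) then 2 `^ (- (n%:R / 2)) / 2 else 0.
Proof.
have -> : mid_defect (schauder j k') (dyadic n k) (dyadic n k.+1) =
    2 `^ (- (j%:R / 2)) *
    mid_defect (fun s => e00 (2 ^+ j * s - k'%:R)) (dyadic n k) (dyadic n k.+1).
  by rewrite /mid_defect /schauder; ring.
rewrite mid_defect_hat_dyadic.
by case: ifP => [/andP[/eqP-> _]|_]; [rewrite mulrA mulr1 | rewrite mulr0].
Qed.

Definition schauder_sum (f : nat -> R -> R) (N : nat) (t : R) : R :=
  \sum_(n < N) \sum_(k < 2 ^ n) f n (dyadic n k) * schauder n k t.

Lemma mid_defect_schauder_sum f N a b :
  mid_defect (schauder_sum f N) a b =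
  \sum_(j < N) \sum_(k < 2 ^ j) f j (dyadic j k) * mid_defect (@schauder R j k) a b.
Proof.
rewrite /mid_defect /schauder_sum -big_split mulr_suml -sumrB.
apply: eq_bigr => j _; rewrite -big_split mulr_suml -sumrB.
by apply: eq_bigr => k _ /=; ring.
Qed.

Lemma schauder_dyadic j k' n K : (n <= j)%N -> schauder j k' (dyadic n K) = 0.
Proof. by move=> nj; rewrite /schauder pow2_dyadic_nat // e00_natB mulr0. Qed.

Lemma schauder_sum_dyadic f n K N : (n <= N)%N ->
  schauder_sum f N (dyadic n K) = schauder_sum f n (dyadic n K).
Proof.
move=> /subnKC <-; elim: (N - n)%N => [|d IH]; first by rewrite addn0.
rewrite addnS /schauder_sum big_ord_recr /= -/(schauder_sum f _ _) IH.
by rewrite big1 ?addr0 // => k _; rewrite schauder_dyadic ?mulr0 // leq_addr.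
Qed.

Lemma x_f_dyadic f n K N : (n <= N)%N ->
  x_f f (dyadic n K) = schauder_sum f N (dyadic n K).
Proof.
move=> nN; rewrite schauder_sum_dyadic //.
apply: cvg_lim => //; apply: cvg_near_cst; exists n => // M /= nM.
exact: schauder_sum_dyadic.
Qed.

Lemma mid_defect_x_f f n k : (k < 2 ^ n)%N ->
  mid_defect (x_f f) (dyadic n k) (dyadic n k.+1) =
  f n (dyadic n k) * (2 `^ (- (n%:R / 2)) / 2).
Proof.
move=> kn.
have -> : mid_defect (x_f f) (dyadic n k) (dyadic n k.+1) =
    mid_defect (schauder_sum f n.+1) (dyadic n k) (dyadic n k.+1).
  rewrite /mid_defect dyadic_mid (x_f_dyadic f _ (leqnn n.+1)).
  by rewrite !(x_f_dyadic f _ (leqnSn n)).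
rewrite mid_defect_schauder_sum big_ord_recr /= big1 ?add0r => [|j _]; last first.
  by rewrite big1 // => k' _; rewrite mid_defect_schauder (ltn_eqF (ltn_ord j)) mulr0.
rewrite (bigD1 (Ordinal kn)) //= big1 ?addr0 => [|k'].
  by rewrite mid_defect_schauder !eqxx.
rewrite -val_eqE /= => /negPf k'k.
by rewrite mid_defect_schauder eqxx k'k mulr0.
Qed.

Lemma mid_defect_linear_approx g (t L e a b : R) :
  `|g a - g t - L * (a - t)| <= e ->
  `|g ((a + b) / 2) - g t - L * ((a + b) / 2 - t)| <= e ->
  `|g b - g t - L * (b - t)| <= e ->
  `|mid_defect g a b| <= 2 * e.
Proof.
have mid_le (A M B : R) : `|A| <= e -> `|M| <= e -> `|B| <= e ->
    `|M - (A + B) / 2| <= 2 * e.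
  move=> hA hM hB; have := ler_normB M ((A + B) / 2); have := ler_normD A B.
  by rewrite normrM (ger0_norm (_ : 0 <= 2^-1)) ?invr_ge0 //; lra.
have -> : mid_defect g a b = (g ((a + b) / 2) - g t - L * ((a + b) / 2 - t)) -
    ((g a - g t - L * (a - t)) + (g b - g t - L * (b - t))) / 2.
  by rewrite /mid_defect; field.
exact: mid_le.
Qed.

Lemma differentiable01_linear_approx g t : differentiable01 g t ->
  exists L, forall e, 0 < e -> exists2 d, 0 < d & forall s, 0 <= s <= 1 ->
    `|s - t| < d -> `|g s - g t - L * (s - t)| <= e * `|s - t|.
Proof.
move=> [L /cvgrPdist_lt HL]; exists L => e e0.
have /nbhs_ballP[d d0 Hd] := HL e e0.
exists d => // s s01 std.
have [->|st] := eqVneq s t; first by rewrite !subrr mulr0 subr0 normr0 mulr0.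
have : `|L - (g s - g t) / (s - t)| < e.
  by apply: Hd => //=; rewrite /ball /= distrC.
have -> : g s - g t - L * (s - t) = ((g s - g t) / (s - t) - L) * (s - t).
  by field; rewrite subr_eq0.
by rewrite normrM distrC ler_pM2r ?normr_gt0 ?subr_eq0 // => /ltW.
Qed.

Lemma dist_le_itv (a b s t : R) :
  a <= s <= b -> a <= t <= b -> `|s - t| <= b - a.
Proof.
by move=> /andP[a_s s_b] /andP[a_t t_b]; rewrite ler_norml; apply/andP; split; lra.
Qed.

Lemma differentiable01_mid_defect_small g t :
  0 <= t <= 1 -> differentiable01 g t ->
  forall e, 0 < e -> exists2 d, 0 < d & forall a b, 0 <= a -> a <= t <= b ->
    b <= 1 -> b - a < d -> `|mid_defect g a b| <= e * (b - a).
Proof.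
move=> t01 /differentiable01_linear_approx[L g_lin] e e0.
have [d d0 g_near] := g_lin (e / 2) ltac:(by rewrite divr_gt0).
exists d => // a b a0 /andP[a_t t_b] b1 abd.
have g_ab s : a <= s <= b -> `|g s - g t - L * (s - t)| <= e / 2 * (b - a).
  move=> sab; have st := dist_le_itv sab (introT andP (conj a_t t_b)).
  have s01 : 0 <= s <= 1 by case/andP: sab => ? ?; apply/andP; split; lra.
  apply: le_trans (g_near s s01 (le_lt_trans st abd)) _.
  by rewrite ler_wpM2l // divr_ge0 // ltW.
rewrite (_ : e * (b - a) = 2 * (e / 2 * (b - a))); last by field.
apply: mid_defect_linear_approx; apply: g_ab; apply/andP; split; lra.
Qed.

Lemma continuous01_atP g t : continuous01_at g t ->
  forall e, 0 < e -> exists2 d, 0 < d &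
    forall s, 0 <= s <= 1 -> `|s - t| < d -> `|g s - g t| < e.
Proof.
move=> /cvgrPdist_lt Hg e e0; have /nbhs_ballP[d d0 Hd] := Hg e e0.
exists d => // s s01 std.
by rewrite distrC; apply: Hd => //=; rewrite /ball /= distrC.
Qed.

Lemma uniform_limit_away_from0 f (finf : R -> R) t :
  (forall e, 0 < e -> exists N, forall n, (N <= n)%N ->
     forall s, 0 <= s <= 1 -> `|f n s - finf s| < e) ->
  continuous01_at finf t -> finf t != 0 ->
  exists N, exists2 d, 0 < d & forall n s, (N <= n)%N -> 0 <= s <= 1 ->
    `|s - t| < d -> `|finf t| / 2 < `|f n s|.
Proof.
move=> f_cvg finf_cont finf_t0.
have c0 : 0 < `|finf t| / 4 by rewrite divr_gt0 ?normr_gt0.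
have [N fN] := f_cvg _ c0; have [d d0 finf_d] := continuous01_atP finf_cont c0.
exists N, d => // n s Nn s01 std.
have := lerB_dist (finf t) (f n s); have := ler_distD (finf s) (finf t) (f n s).
rewrite [`|finf t - finf s|]distrC [`|finf s - f n s|]distrC.
have := fN n Nn s s01; have := finf_d s s01 std; lra.
Qed.

Lemma pow2_inv_le_powR n : (2 ^+ n)^-1 <= 2 `^ (- (n%:R / 2)) :> R.
Proof.
rewrite -powR_mulrn // -powRN; apply: ler_powR; first lra.
have : 0 <= n%:R :> R by [].
lra.
Qed.

Lemma exists_pow2_inv_lt (N : nat) (e : R) : 0 < e ->
  exists2 n, (N <= n)%N & (2 ^+ n)^-1 < e.
Proof.
move=> e0; near \oo => n; exists n; first by near: n; exists N.
rewrite -[_^-1]mul1r; near: n; exact: (near_infty_natSinv_expn_lt (PosNum e0)).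
Unshelve. all: by end_near. Qed.

Lemma mid_defect_x_f_ge f n k : (k < 2 ^ n)%N ->
  `|f n (dyadic n k)| * (2 ^+ n)^-1 / 2 <=
  `|mid_defect (x_f f) (dyadic n k) (dyadic n k.+1)|.
Proof.
move=> kn; rewrite mid_defect_x_f // normrM [`|_ / 2|]ger0_norm ?divr_ge0 ?powR_ge0 //.
by rewrite mulrA ler_pM2r // ler_wpM2l // pow2_inv_le_powR.
Qed.

Lemma x_f_not_differentiable01 f (finf : R -> R) t : in_classF f finf ->
  0 <= t <= 1 -> continuous01_at finf t -> finf t != 0 ->
  ~ differentiable01 (x_f f) t.
Proof.
move=> [_ [f_cvg _]] t01 finf_cont finf_t0.
move=> /(differentiable01_mid_defect_small t01) x_mid.
set c := `|finf t|; have c0 : 0 < c by rewrite normr_gt0.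
have [N [d1 d10 f_large]] := uniform_limit_away_from0 f_cvg finf_cont finf_t0.
have [d2 d20 x_small] := x_mid (c / 8) ltac:(by rewrite divr_gt0).
have d0 : 0 < Num.min d1 d2 by rewrite lt_min d10 d20.
have [n Nn] := exists_pow2_inv_lt N d0; rewrite lt_min => /andP[hd1 hd2].
have [k kn lkr] := dyadic_cell n t01.
have lt : `|dyadic n k - t| < d1.
  by rewrite (le_lt_trans _ hd1) // -(dyadicSB n k) dist_le_itv // lexx ler_dyadic leqnSn.
have l01 : 0 <= dyadic n k <= 1.
  by rewrite dyadic_ge0 -(dyadic_pow2 n) ler_dyadic ltnW.
have r1 : dyadic n k.+1 <= 1 by rewrite -(dyadic_pow2 n) ler_dyadic.
have := x_small _ _ (dyadic_ge0 n k) lkr r1; rewrite dyadicSB => /(_ hd2).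
have := mid_defect_x_f_ge f kn; have := f_large n _ Nn l01 lt.
have h0 := pow2_inv_gt0 n.
move: (`|f n _|) (`|mid_defect _ _ _|) => a m; rewrite -/c => ca am mc.
have : c / 2 * (2 ^+ n)^-1 <= a * (2 ^+ n)^-1 by rewrite ler_pM2r // ltW.
have : 0 < c * (2 ^+ n)^-1 by rewrite mulr_gt0.
lra.
Qed.

Lemma negligible_approx d (T : measurableType d)
    (mu : {measure set T -> \bar R}) (N : set T) :
  (forall e : R, 0 < e ->
     exists A, [/\ measurable A, N `<=` A & (mu A <= e%:E)%E]) ->
  mu.-negligible N.
Proof.
move=> N_approx.
have /choice[F F_approx] : forall j : nat, exists A,
    [/\ measurable A, N `<=` A & (mu A <= ((2 ^+ j)^-1)%:E)%E].
  by move=> j; apply: N_approx; exact: pow2_inv_gt0.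
have mF j : measurable (F j) by case: (F_approx j).
exists (\bigcap_j F j); split; first exact: bigcapT_measurable.
- apply/eqP; rewrite eq_le measure_ge0 andbT; apply/lee_addgt0Pr => e e0.
  have [j _ je] := exists_pow2_inv_lt 0 e0.
  have sub : \bigcap_i F i `<=` F j by exact: bigcap_inf.
  rewrite add0e (le_trans (le_measure _ _ _ sub)) ?inE //.
    exact: bigcapT_measurable.
  by case: (F_approx j) => _ _ /le_trans; apply; rewrite lee_fin ltW.
- by move=> t Nt j _; case: (F_approx j) => _ /(_ t Nt).
Qed.

Definition osc_set g (j : nat) : set R := [set t | 0 <= t <= 1 /\
  forall d, 0 < d -> exists s, [/\ 0 <= s <= 1, `|s - t| < d &
    (2 ^+ j)^-1 <= `|g s - g t|]].

Lemma discontinuous01_osc_set g t : 0 <= t <= 1 -> ~ continuous01_at g t ->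
  exists j, osc_set g j t.
Proof.
move=> t01 g_discont; apply: contra_notP g_discont => /forallNP not_osc.
apply/cvgrPdist_lt => e e0.
have [j _ je] := exists_pow2_inv_lt 0 e0.
have [d d0 g_near] : exists2 d, 0 < d & forall s, 0 <= s <= 1 ->
    `|s - t| < d -> `|g s - g t| < (2 ^+ j)^-1.
  apply: contra_notP (not_osc j) => no_d; split => // d d0.
  apply: contra_notP no_d => no_s; exists d => // s s01 std.
  by rewrite ltNge; apply/negP => osc; apply: no_s; exists s.
apply/nbhs_ballP; exists d => // s; rewrite /ball /= => ts s01.
rewrite /= in_itv /= in s01; rewrite distrC (lt_trans _ je) // g_near //.
by rewrite distrC.
Qed.

Definition osc_cell g (n : nat) (c : R) (i : nat) : Prop := exists x y,
  [/\ dyadic n i <= x <= dyadic n i.+1, dyadic n i <= y <= dyadic n i.+1 &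
      c <= g x - g y].

Lemma osc_cellP g n c i x y : dyadic n i <= x <= dyadic n i.+1 ->
  dyadic n i <= y <= dyadic n i.+1 -> c <= `|g x - g y| -> osc_cell g n c i.
Proof.
move=> xi yi; rewrite ler_normr => /orP[gxy|gyx]; first by exists x, y.
by exists y, x; rewrite opprB in gyx.
Qed.

Definition wide_cell (n i : nat) : set R :=
  [set` `[dyadic n i - (2 ^+ n)^-1, dyadic n i.+1 + (2 ^+ n)^-1]].

Lemma osc_cell_near g n c a b : 0 <= c -> 0 <= a <= 1 -> 0 <= b <= 1 ->
  `|a - b| < (2 ^+ n)^-1 -> 2 * c <= `|g a - g b| ->
  exists2 i, (i < 2 ^ n)%N /\ osc_cell g n c i &
    wide_cell n i a /\ wide_cell n i b.
Proof.
move=> c0; wlog ab : a b / a <= b.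
  move=> wlog_ab a01 b01 abh gab.
  have [ab|ba] := leP a b; first exact: wlog_ab.
  rewrite distrC in abh; rewrite distrC in gab.
  by have [i osc [ia ib]] := wlog_ab b a (ltW ba) b01 a01 abh gab; exists i.
move=> a01 b01 abh gab; set h := (2 ^+ n)^-1 in abh *.
have [k kn /andP[ka ak]] := dyadic_cell n a01.
have Sk := dyadicS n k; have SSk := dyadicS n k.+1; rewrite -/h in Sk SSk.
move: abh; rewrite distrC ger0_norm ?subr_ge0 // => abh.
have wide i x : dyadic n i - h <= x <= dyadic n i.+1 + h -> wide_cell n i x.
  by move=> xi; rewrite /wide_cell /= in_itv.
have [bk|kb] := lerP b (dyadic n k.+1).
  exists k; last by split; apply: wide; apply/andP; split; lra.
  split => //; apply: (@osc_cellP _ _ _ _ a b); try (apply/andP; split); lra.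
have k1n : (k.+1 < 2 ^ n)%N.
  by rewrite -(ltr_dyadic n) dyadic_pow2; case/andP: b01 => _; lra.
have [gak|gak] := lerP c `|g a - g (dyadic n k.+1)|.
  exists k; last by split; apply: wide; apply/andP; split; lra.
  by split => //; apply: (@osc_cellP _ _ _ _ a (dyadic n k.+1)) => //;
    apply/andP; split; lra.
exists k.+1; last by split; apply: wide; apply/andP; split; lra.
split => //; apply: (@osc_cellP _ _ _ _ (dyadic n k.+1) b);
  try by apply/andP; split; lra.
have := ler_normD (g a - g (dyadic n k.+1)) (g (dyadic n k.+1) - g b).
by rewrite addrA subrK; lra.
Qed.

Lemma riemann_dyadic_sums g : riemann_integrable01 g ->
  exists I, forall e, 0 < e -> exists n, forall tg : nat -> R,
    (forall i, (i < 2 ^ n)%N -> dyadic n i <= tg i <= dyadic n i.+1) ->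
    `|\sum_(i < 2 ^ n) g (tg i) * (2 ^+ n)^-1 - I| < e.
Proof.
move=> [I g_int]; exists I => e e0.
have [d [d0 g_sum]] := g_int e e0.
have [n _ nd] := exists_pow2_inv_lt 0 d0.
exists n => tg tg_in.
under eq_bigr => i _ do rewrite -(dyadicSB n i).
apply: g_sum => //; first exact: dyadicn0.
- exact: dyadic_pow2.
- by move=> i _; rewrite ltr_dyadic.
- by move=> i _; rewrite dyadicSB.
Qed.

Lemma riemann_osc_cells_small g (c e : R) :
  riemann_integrable01 g -> 0 < c -> 0 < e ->
  exists n, \sum_(i < 2 ^ n | `[< osc_cell g n c i >]) (2 ^+ n)^-1 <= e.
Proof.
move=> /riemann_dyadic_sums[I g_sums] c0 e0.
have [n g_n] := g_sums (c * e / 2) ltac:(by rewrite divr_gt0 ?mulr_gt0).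
exists n; set h := (2 ^+ n)^-1; have h0 : 0 < h := pow2_inv_gt0 n.
have /choice[p p_tag] : forall i : nat, exists p : R * R,
    [/\ dyadic n i <= p.1 <= dyadic n i.+1, dyadic n i <= p.2 <= dyadic n i.+1 &
        if `[< osc_cell g n c i >] then c <= g p.1 - g p.2 else p.1 == p.2].
  move=> i; case: asboolP => [[x [y [xi yi gxy]]]|_]; first by exists (x, y).
  by exists (dyadic n i, dyadic n i); rewrite /= lexx ler_dyadic leqnSn.
have S1 := g_n (fun i => (p i).1) (fun i _ => let: And3 pi1 _ _ := p_tag i in pi1).
have S2 := g_n (fun i => (p i).2) (fun i _ => let: And3 _ pi2 _ := p_tag i in pi2).
have gap : c * \sum_(i < 2 ^ n | `[< osc_cell g n c i >]) h <=
    \sum_(i < 2 ^ n) g (p i).1 * h - \sum_(i < 2 ^ n) g (p i).2 * h.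
  rewrite mulr_sumr big_mkcond -sumrB; apply: ler_sum => i _; rewrite -mulrBl.
  case: (p_tag i) => _ _; case: asboolP => _ /= => [gp|/eqP->].
    by rewrite ler_pM2r.
  by rewrite subrr mul0r.
have : c * \sum_(i < 2 ^ n | `[< osc_cell g n c i >]) h <= c * e.
  by move: S1 S2; rewrite !ltr_norml => /andP[? ?] /andP[? ?]; lra.
by rewrite ler_pM2l.
Qed.

Definition osc_cover g n c : set R :=
  \big[setU/set0]_(i < 2 ^ n | `[< osc_cell g n c i >]) wide_cell n i.

Lemma measurable_osc_cover g n c : measurable (osc_cover g n c).
Proof. by apply: bigsetU_measurable => i _; exact: measurable_itv. Qed.

Lemma lebesgue_measure_wide_cell n i :
  lebesgue_measure (wide_cell n i) = (3 * (2 ^+ n)^-1)%:E.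
Proof.
have h0 := pow2_inv_gt0 n.
rewrite lebesgue_measure_itv /= lte_fin dyadicS ifT; last by lra.
by rewrite -EFinD; congr (_%:E); ring.
Qed.

Lemma lebesgue_measure_osc_cover g n c : (lebesgue_measure (osc_cover g n c) <=
  (3 * \sum_(i < 2 ^ n | `[< osc_cell g n c i >]) (2 ^+ n)^-1)%:E)%E.
Proof.
set F := fun i : nat => if `[< osc_cell g n c i >] then wide_cell n i else set0.
have mF i : measurable (F i).
  by rewrite /F; case: ifP => _ //; exact: measurable_itv.
rewrite mulr_sumr big_mkcond /= -sumEFin /osc_cover big_mkcond /=.
apply: le_trans (@content_subadditive _ _ _ lebesgue_measure _ F (2 ^ n)%N
  (fun i _ => mF i) _ _) _.
- by apply: bigsetU_measurable => i _; exact: mF.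
- by [].
apply: lee_sum => i _.
rewrite /F; case: ifP => _; last by rewrite measure0.
by rewrite le_eqVlt (introT eqP (lebesgue_measure_wide_cell n i)).
Qed.

Lemma osc_set_sub_cover g j n : osc_set g j `<=` osc_cover g n ((2 ^+ j)^-1 / 2).
Proof.
move=> t [t01 t_osc].
have [s [s01 st gst]] := t_osc _ (pow2_inv_gt0 n).
set c := (2 ^+ j)^-1 / 2.
have c0 : 0 <= c by rewrite divr_ge0 // ltW // pow2_inv_gt0.
have gst2 : 2 * c <= `|g s - g t| by rewrite /c mulrC divfK.
have [i [i_lt osc] [_ it]] := osc_cell_near c0 s01 t01 st gst2.
rewrite /osc_cover big_mkcond /= -(bigcup_mkord _
  (fun i => if `[< osc_cell g n c i >] then wide_cell n i else set0)).
by exists i => //=; rewrite asboolT.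
Qed.

Lemma osc_set_negligible g j : riemann_integrable01 g ->
  (@lebesgue_measure R).-negligible (osc_set g j).
Proof.
move=> g_int; apply: negligible_approx => e e0.
pose c : R := (2 ^+ j)^-1 / 2.
have c0 : 0 < c by rewrite divr_gt0 ?pow2_inv_gt0.
have e3 : 0 < e / 3 by rewrite divr_gt0.
have [n osc_small] := riemann_osc_cells_small g_int c0 e3.
exists (osc_cover g n c); split; first exact: measurable_osc_cover.
  exact: osc_set_sub_cover.
apply: le_trans (lebesgue_measure_osc_cover g n c) _.
by rewrite lee_fin; lra.
Qed.

End FaberSchauder.

Theorem proposition2p5 (R : realType) (f : nat -> R -> R) (finf : R -> R) :
  in_classF f finf ->
  (forall t : R, 0 <= t <= 1 -> continuous01_at finf t -> finf t != 0 ->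
     ~ differentiable01 (x_f f) t) /\
  (@lebesgue_measure R).-negligible
     [set t : R | 0 <= t <= 1 /\ finf t != 0 /\ differentiable01 (x_f f) t].
Proof.
move=> f_F; split => [t|]; first exact: x_f_not_differentiable01.
have [_ [_ finf_int]] := f_F.
apply: negligibleS (negligible_bigcup (fun j => osc_set_negligible j finf_int)).
move=> t [t01 [finf_t0 x_diff]].
have finf_discont : ~ continuous01_at finf t.
  by move/x_f_not_differentiable01 => /(_ f f_F t01 finf_t0).
by have [j osc] := discontinuous01_osc_set t01 finf_discont; exists j.
Qed.
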